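(* Let $(S,T)$ be an ideally triangulated surface with $\chi(S)<0$, with edge set $E$ and triangle set $F$. Let $l^{(m)}\in\mathbb{R}^E$ ($m\ge 0$) be a sequence such that $\widetilde\Psi(l^{(m)})\to z$ as $m\to\infty$ for some $z\in P(T)$. Then for every corner of every triangle in $F$, the corresponding generalized angles $\theta^{(m)}$ in the metrics $l^{(m)}$ form a bounded sequence; in particular, if $\lim_{m\to\infty}\theta^{(m)}$ exists in $[0,\infty]$, it lies in $[0,\infty)$.
   Context: For $l\in\mathbb{R}^E$, realize each triangle of $T$ as a decorated ideal hyperbolic triangle (ideal triangle with a horodisk at each vertex) whose generalized edge lengths are given by $l$; here the generalized angle at a vertex is twice the length of the horocyclic arc inside the triangle, and the generalized length of an edge is the distance between the horodisks at its ends if they are disjoint and minus the distance between the points where the two horocycles meet the edge otherwise. (The lengths determine the angles via $\frac{e^{l_i}}{2}=\frac{2}{\theta_j\theta_k}$, with $\theta_i$ the angle opposite the edge of length $l_i$.) In a triangle with angles $\theta_i,\theta_j,\theta_k$, the radius invariant at the edge opposite $\theta_i$ is $\frac12(\theta_j+\theta_k-\theta_i)$. Define $\widetilde\Psi(l)(e)=r_f(e)+r_{f'}(e)$, where $f,f'$ are the two triangles adjacent to $e$ and $r_f(e),r_{f'}(e)$ are the radius invariants at $e$ in them. An edge cycle is a sequence $(e_1,t_1,\dots,e_k,t_k)$ of edges and triangles such that, with $e_{k+1}=e_1$, $e_i$ and $e_{i+1}$ are two distinct edges of $t_i$ for each $i$. $P(T)=\{z\in\mathbb{R}^E:\sum_{i=1}^k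 z(e_i)>0$ for every edge cycle $(e_1,t_1,\dots,e_k,t_k)\}$. *)

From Stdlib Require Import Reals Lra List Arith Relations.
Import ListNotations.
Open Scope R_scope.

(* Combinatorial ideal triangulation:
   edges   = {0, ..., nE-1},  triangles = {0, ..., nF-1},
   each triangle t has three sides (corners) i in {0,1,2};
   ed t i  = the edge of triangle t opposite to its corner i. *)

Definition nxt (i : nat) : nat := ((i + 1) mod 3)%nat.
Definition nxt2 (i : nat) : nat := ((i + 2) mod 3)%nat.

Definition ed_wf (nE nF : nat) (ed : nat -> nat -> nat) : Prop :=
  forall t i, (t < nF)%nat -> (i < 3)%nat -> (ed t i < nE)%nat.

Definition two_sided (nE nF : nat) (ed : nat -> nat -> nat) : Prop :=
  forall e, (e < nE)%nat ->
    exists t1 i1 t2 i2,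
      (t1 < nF)%nat /\ (i1 < 3)%nat /\ (t2 < nF)%nat /\ (i2 < 3)%nat /\
      (t1, i1) <> (t2, i2) /\ ed t1 i1 = e /\ ed t2 i2 = e /\
      forall t i, (t < nF)%nat -> (i < 3)%nat -> ed t i = e ->
        (t, i) = (t1, i1) \/ (t, i) = (t2, i2).

Definition tri_adj (nF : nat) (ed : nat -> nat -> nat) (t t' : nat) : Prop :=
  (t < nF)%nat /\ (t' < nF)%nat /\
  exists i j, (i < 3)%nat /\ (j < 3)%nat /\ ed t i = ed t' j.

Definition connected_tri (nF : nat) (ed : nat -> nat -> nat) : Prop :=
  forall t t', (t < nF)%nat -> (t' < nF)%nat ->
    clos_refl_trans nat (tri_adj nF ed) t t'.

(* Euler characteristic of the punctured surface S = closed surface minus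
   the ideal vertices: chi(S) = V - E + F - V = F - E. *)
Definition euler_char (nE nF : nat) : Z := (Z.of_nat nF - Z.of_nat nE)%Z.

(* Generalized angle at corner i of triangle t for edge lengths l:
   the unique positive solution of  e^{l_i}/2 = 2/(theta_j theta_k),
   namely theta_i = 2 exp((l_i - l_j - l_k)/2). *)
Definition theta (ed : nat -> nat -> nat) (l : nat -> R) (t i : nat) : R :=
  2 * exp ((l (ed t i) - l (ed t (nxt i)) - l (ed t (nxt2 i))) / 2).

Definition radius (ed : nat -> nat -> nat) (l : nat -> R) (t i : nat) : R :=
  (theta ed l t (nxt i) + theta ed l t (nxt2 i) - theta ed l t i) / 2.

Definition sumR (f : nat -> R) (n : nat) : R :=
  fold_right Rplus 0 (map f (seq 0 n)).

Definition Psi (nF : nat) (ed : nat -> nat -> nat) (l : nat -> R) (e : nat) : R :=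
  sumR (fun t => sumR (fun i =>
         if Nat.eq_dec (ed t i) e then radius ed l t i else 0) 3) nF.

(* An edge cycle (e_1,t_1,...,e_k,t_k) is encoded as a nonempty list of
   triples (t_i, a_i, b_i): a_i <> b_i are two sides of t_i, with
   e_i = ed t_i a_i and e_{i+1} = ed t_i b_i (indices cyclic). *)
Definition cyc_t (c : list (nat * nat * nat)) (i : nat) : nat :=
  fst (fst (nth i c (0%nat, 0%nat, 0%nat))).
Definition cyc_a (c : list (nat * nat * nat)) (i : nat) : nat :=
  snd (fst (nth i c (0%nat, 0%nat, 0%nat))).
Definition cyc_b (c : list (nat * nat * nat)) (i : nat) : nat :=
  snd (nth i c (0%nat, 0%nat, 0%nat)).

Definition edge_cycle (nF : nat) (ed : nat -> nat -> nat)
    (c : list (nat * nat * nat)) : Prop :=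
  c <> [] /\
  forall i, (i < length c)%nat ->
    (cyc_t c i < nF)%nat /\ (cyc_a c i < 3)%nat /\ (cyc_b c i < 3)%nat /\
    cyc_a c i <> cyc_b c i /\
    ed (cyc_t c i) (cyc_b c i) =
      ed (cyc_t c ((i + 1) mod length c)) (cyc_a c ((i + 1) mod length c)).

Definition in_P (nF : nat) (ed : nat -> nat -> nat) (z : nat -> R) : Prop :=
  forall c, edge_cycle nF ed c ->
    0 < sumR (fun i => z (ed (cyc_t c i) (cyc_a c i))) (length c).

From Stdlib Require Import Reals List Arith Relations Lra Lia.
Open Scope R_scope.

(* In every triangle the three radius invariants add up to half
   the angle sum: summing (theta_j + theta_k - theta_i)/2 over the three
   corners counts each angle once with sign - and twice with sign +.  Every
   side of a triangle is glued to exactly one edge, so summing Psi~(l) over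
   all edges regroups into a sum over all triangles, giving the identity
       sum over all corners of theta(l) = 2 * sum over edges of Psi~(l)(e).
   Since generalized angles are positive, each single angle is at most the
   total angle sum.  Along the sequence l^(m) the right-hand side converges
   (to 2 * sum z(e)), hence is bounded; so every angle sequence is bounded
   and in particular does not diverge to +infinity.  Only the fact that
   every triangle side is labeled by an edge ([ed_wf]) is used. *)

Lemma fold_right_Rplus_init (l : list R) (a : R) :
  fold_right Rplus a l = fold_right Rplus 0 l + a.
Proof. induction l as [|x l IH]; simpl; [lra | rewrite IH; lra]. Qed.

Lemma sumR_0 (f : nat -> R) : sumR f 0 = 0.
Proof. reflexivity. Qed.

Lemma sumR_S (f : nat -> R) (n : nat) : sumR f (S n) = sumR f n + f n.
Proof.
  unfold sumR. rewrite seq_S, map_app, fold_right_app; simpl.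
  rewrite fold_right_Rplus_init. lra.
Qed.

Lemma sumR_ext (f g : nat -> R) (n : nat) :
  (forall k, (k < n)%nat -> f k = g k) -> sumR f n = sumR g n.
Proof.
  induction n as [|n IH]; intros Hfg; [reflexivity|].
  rewrite !sumR_S, IH, Hfg; auto; lia.
Qed.

Lemma sumR_plus (f g : nat -> R) (n : nat) :
  sumR (fun k => f k + g k) n = sumR f n + sumR g n.
Proof.
  induction n as [|n IH]; [rewrite !sumR_0; lra|]. rewrite !sumR_S, IH. lra.
Qed.

Lemma sumR_scal (c : R) (f : nat -> R) (n : nat) :
  sumR (fun k => c * f k) n = c * sumR f n.
Proof.
  induction n as [|n IH]; [rewrite !sumR_0; lra|]. rewrite !sumR_S, IH. lra.
Qed.

Lemma sumR_zero (n : nat) : sumR (fun _ => 0) n = 0.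
Proof. induction n as [|n IH]; [apply sumR_0 | rewrite sumR_S, IH; lra]. Qed.

Lemma sumR_swap (f : nat -> nat -> R) (m n : nat) :
  sumR (fun a => sumR (fun b => f a b) n) m =
  sumR (fun b => sumR (fun a => f a b) m) n.
Proof.
  induction m as [|m IH].
  - rewrite sumR_0, <- (sumR_zero n). apply sumR_ext. intros. symmetry. apply sumR_0.
  - rewrite sumR_S, IH, <- sumR_plus. apply sumR_ext. intros. now rewrite sumR_S.
Qed.

(* Summing an indicator picks out the single index where it is nonzero;
   this is how the edge-sum of Psi~ collapses onto the triangle sides. *)
Lemma sumR_indicator (e0 : nat) (c : R) (n : nat) : (e0 < n)%nat ->
  sumR (fun e => if Nat.eq_dec e0 e then c else 0) n = c.
Proof.
  induction n as [|n IH]; intros He0; [lia|]. rewrite sumR_S.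
  destruct (Nat.eq_dec e0 n) as [->|Hne].
  - rewrite (sumR_ext _ (fun _ => 0)), sumR_zero; [lra|].
    intros k Hk. destruct (Nat.eq_dec n k); [lia | lra].
  - rewrite IH; [lra | lia].
Qed.

Lemma sumR_nonneg (f : nat -> R) (n : nat) :
  (forall k, (k < n)%nat -> 0 <= f k) -> 0 <= sumR f n.
Proof.
  induction n as [|n IH]; intros Hf; [rewrite !sumR_0; lra|]. rewrite sumR_S.
  assert (0 <= f n) by (apply Hf; lia).
  assert (0 <= sumR f n) by (apply IH; intros; apply Hf; lia). lra.
Qed.

Lemma sumR_term_le (f : nat -> R) (n k : nat) :
  (forall j, (j < n)%nat -> 0 <= f j) -> (k < n)%nat -> f k <= sumR f n.
Proof.
  induction n as [|n IH]; intros Hf Hk; [lia|]. rewrite sumR_S.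
  assert (0 <= f n) by (apply Hf; lia).
  destruct (Nat.eq_dec k n) as [->|Hne].
  - assert (0 <= sumR f n) by (apply sumR_nonneg; intros; apply Hf; lia). lra.
  - assert (f k <= sumR f n) by (apply IH; [intros; apply Hf; lia | lia]). lra.
Qed.

Lemma sumR_Un_cv (u : nat -> nat -> R) (z : nat -> R) (n : nat) :
  (forall e, (e < n)%nat -> Un_cv (fun m => u m e) (z e)) ->
  Un_cv (fun m => sumR (u m) n) (sumR z n).
Proof.
  induction n as [|n IH]; intros Hu.
  - intros eps Heps. exists 0%nat. intros. unfold R_dist. rewrite !sumR_0.
    rewrite Rminus_0_r, Rabs_R0. lra.
  - rewrite sumR_S. apply (Un_cv_ext (fun m => sumR (u m) n + u m n)).
    + intros; now rewrite sumR_S.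
    + apply CV_plus; [apply IH; intros; apply Hu; lia | apply Hu; lia].
Qed.

Lemma theta_pos (ed : nat -> nat -> nat) (l : nat -> R) (t i : nat) :
  0 < theta ed l t i.
Proof. unfold theta. pose proof (exp_pos ((l (ed t i) - l (ed t (nxt i)) - l (ed t (nxt2 i))) / 2)). lra. Qed.

Lemma radius_sum (ed : nat -> nat -> nat) (l : nat -> R) (t : nat) :
  sumR (fun i => radius ed l t i) 3 = sumR (fun i => theta ed l t i) 3 / 2.
Proof. rewrite !sumR_S, !sumR_0. unfold radius, nxt, nxt2; simpl. lra. Qed.

Lemma total_angle_sum (nE nF : nat) (ed : nat -> nat -> nat)
  (Hwf : ed_wf nE nF ed) (l : nat -> R) :
  sumR (fun t => sumR (fun i => theta ed l t i) 3) nF =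
  2 * sumR (fun e => Psi nF ed l e) nE.
Proof.
  unfold Psi.
  rewrite (sumR_swap (fun e t => sumR (fun i =>
             if Nat.eq_dec (ed t i) e then radius ed l t i else 0) 3)).
  rewrite <- sumR_scal. apply sumR_ext. intros t Ht.
  transitivity (2 * sumR (fun i => radius ed l t i) 3);
    [rewrite radius_sum; lra | f_equal].
  rewrite sumR_swap. apply sumR_ext. intros i Hi.
  symmetry. apply sumR_indicator, Hwf; assumption.
Qed.

Lemma theta_le_Psi_total (nE nF : nat) (ed : nat -> nat -> nat)
  (Hwf : ed_wf nE nF ed) (l : nat -> R) (t i : nat) :
  (t < nF)%nat -> (i < 3)%nat ->
  theta ed l t i <= 2 * sumR (fun e => Psi nF ed l e) nE.
Proof.
  intros Ht Hi. rewrite <- (total_angle_sum nE nF ed Hwf l).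
  assert (Hcorner : forall s j, 0 <= theta ed l s j)
    by (intros; left; apply theta_pos).
  apply Rle_trans with (sumR (fun j => theta ed l t j) 3).
  - apply (sumR_term_le (fun j => theta ed l t j)); auto.
  - apply (sumR_term_le (fun s => sumR (fun j => theta ed l s j) 3)); auto.
    intros s _. apply sumR_nonneg. auto.
Qed.

Lemma Un_cv_bounded_above (u : nat -> R) (z : R) :
  Un_cv u z -> exists B, forall m, u m <= B.
Proof.
  intros Hu. destruct (cauchy_bound u) as [B HB].
  - apply CV_Cauchy. exists z. exact Hu.
  - exists B. intro m. apply HB. exists m. reflexivity.
Qed.

Lemma bounded_not_cv_infty (u : nat -> R) (B : R) :
  (forall m, u m <= B) -> ~ cv_infty u.
Proof.
  intros HB Hinf. destruct (Hinf B) as [N HN].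
  specialize (HN N (le_n N)). specialize (HB N). lra.
Qed.

Theorem lemma2p4 (nE nF : nat) (ed : nat -> nat -> nat)
  (Hwf : ed_wf nE nF ed) (Htwo : two_sided nE nF ed)
  (Hconn : connected_tri nF ed) (Hchi : (euler_char nE nF < 0)%Z)
  (lseq : nat -> nat -> R) (z : nat -> R)
  (Hz : in_P nF ed z)
  (Hlim : forall e, (e < nE)%nat -> Un_cv (fun m => Psi nF ed (lseq m) e) (z e)) :
  forall t i, (t < nF)%nat -> (i < 3)%nat ->
    (exists M, forall m, theta ed (lseq m) t i <= M) /\
    ~ cv_infty (fun m => theta ed (lseq m) t i).
Proof.
  intros t i Ht Hi.
  destruct (Un_cv_bounded_above _ _
              (sumR_Un_cv (fun m e => Psi nF ed (lseq m) e) z nE Hlim))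
    as [B HB].
  assert (Hbound : forall m, theta ed (lseq m) t i <= 2 * B).
  { intro m. pose proof (theta_le_Psi_total nE nF ed Hwf (lseq m) t i Ht Hi).
    specialize (HB m). simpl in HB. lra. }
  split.
  - exists (2 * B). exact Hbound.
  - exact (bounded_not_cv_infty _ _ Hbound).
Qed.
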